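(* Let $n\ge 2$, $d_1,\ldots,d_n\in\mathbb{N}$, and let $d$ be a dependence measure, i.e. a map assigning a real number $d(X_1,\ldots,X_n)$ to random vectors $X_i=(X_{i,1},\ldots,X_{i,d_i})$ with values in $\mathbb{R}^{d_i}$, where $d(X_1,\ldots,X_n)$ depends only on the joint distribution of $(X_1,\ldots,X_n)$. Assume $d$ is translation invariant (i.e. $d(X_1+a_1,\ldots,X_n+a_n)=d(X_1,\ldots,X_n)$ for all constant vectors $a_i\in\mathbb{R}^{d_i}$) and symmetric in each element (i.e. the value of $d$ does not change if any single element $X_{i,k}$ is replaced by $-X_{i,k}$). Define $$d_{cop}(X_1,\ldots,X_n) := d\big(T_{X_1}(X_1,U_1),\ldots,T_{X_n}(X_n,U_n)\big),$$ where $T_{X_i}(X_i,U_i) := \big(T_{X_{i,1}}(X_{i,1},U_{i,1}),\ldots,T_{X_{i,d_i}}(X_{i,d_i},U_{i,d_i})\big)$, for a real random variable $Y$ we set $T_Y(y,u):=\mathbb{P}(Y<y)+u\,\mathbb{P}(Y=y)$, and the $U_{i,k}$ ($i=1,\ldots,n$, $k=1,\ldots,d_i$) are independent random variables uniformly distributed on $[0,1]$, independent of $(X_1,\ldots,X_n)$. Then for all strictly monotone (each either strictly increasing or strictly decreasing) functions $g_{i,k}:\mathbb{R}\to\mathbb{R}$, $i=1,\ldots,n$, $k=1,\ldots,d_i$, $$d_{cop}(X_1,\ldots,X_n) = d_{cop}\big(g_1(X_1),\ldots,g_n(X_n)\big),$$ where $g_i(X_i):=(g_{i,1}(X_{i,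1}),\ldots,g_{i,d_i}(X_{i,d_i}))$.
   Context: The random variable $T_Y(Y,U)$ with $U$ uniform on $[0,1]$ independent of $Y$ is called the distributional transform of $Y$; for a random vector it is taken element-wise with independent uniform variables for each element. The ''elements'' of the random vector $X_i$ are its univariate coordinates $X_{i,k}$. *)

From HB Require Import structures.
From mathcomp Require Import all_boot all_order all_algebra.
From mathcomp Require Import all_classical all_reals all_analysis.
Set Implicit Arguments. Unset Strict Implicit. Unset Printing Implicit Defensive.
Import Order.TTheory GRing.Theory Num.Theory.
Local Open Scope classical_set_scope.
Local Open Scope ring_scope.

(* A family of random vectors X_1,...,X_n with X_i in R^{dd i} on a
   probability space (T,P) is represented by its coordinates
   X i k : T -> R  (i : 'I_n, k : 'I_(dd i)). *)

Definition rvfam (R : realType) (T : Type) (n : nat) (dd : 'I_n -> nat) :=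
  forall i : 'I_n, 'I_(dd i) -> T -> R.

Definition rvfam_meas (R : realType) (dsp : measure_display)
  (T : measurableType dsp) n (dd : 'I_n -> nat) (X : rvfam R T dd) :=
  forall i k, measurable_fun setT (X i k).

Definition dep_measure (R : realType) n (dd : 'I_n -> nat) :=
  forall (dsp : measure_display) (T : measurableType dsp),
    probability T R -> rvfam R T dd -> R.

(* The joint law of X under P evaluated on a measurable rectangle
   prod_{i,k} A i k; equality on all rectangles = equality of joint laws. *)
Definition same_law (R : realType) n (dd : 'I_n -> nat)
  (d1 : measure_display) (T1 : measurableType d1) (P1 : probability T1 R)
  (X1 : rvfam R T1 dd)
  (d2 : measure_display) (T2 : measurableType d2) (P2 : probability T2 R)
  (X2 : rvfam R T2 dd) :=
  forall A : forall i : 'I_n, 'I_(dd i) -> set R,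
    (forall i k, measurable (A i k)) ->
    P1 [set w | forall i k, A i k (X1 i k w)] =
    P2 [set w | forall i k, A i k (X2 i k w)].

Definition law_invariant (R : realType) n (dd : 'I_n -> nat)
  (d : dep_measure R dd) :=
  forall (d1 : measure_display) (T1 : measurableType d1) (P1 : probability T1 R)
    (X1 : rvfam R T1 dd)
    (d2 : measure_display) (T2 : measurableType d2) (P2 : probability T2 R)
    (X2 : rvfam R T2 dd),
    rvfam_meas X1 -> rvfam_meas X2 ->
    same_law P1 X1 P2 X2 -> d d1 T1 P1 X1 = d d2 T2 P2 X2.

Definition translation_invariant (R : realType) n (dd : 'I_n -> nat)
  (d : dep_measure R dd) :=
  forall (dsp : measure_display) (T : measurableType dsp) (P : probability T R)
    (X : rvfam R T dd) (a : forall i : 'I_n, 'I_(dd i) -> R),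
    rvfam_meas X ->
    d dsp T P (fun i k w => X i k w + a i k) = d dsp T P X.

Definition elementwise_symmetric (R : realType) n (dd : 'I_n -> nat)
  (d : dep_measure R dd) :=
  forall (dsp : measure_display) (T : measurableType dsp) (P : probability T R)
    (X : rvfam R T dd) (i0 : 'I_n) (k0 : 'I_(dd i0)),
    rvfam_meas X ->
    d dsp T P (fun i k w =>
      if (i == i0) && (val k == val k0) then - X i k w else X i k w) = d dsp T P X.

Definition dtransform (R : realType) (dsp : measure_display)
  (T : measurableType dsp) (P : probability T R) (Y : T -> R) (y u : R) : R :=
  fine (P [set w | Y w < y]) + u * fine (P [set w | Y w = y]).

Definition indep_uniforms_of (R : realType) (dsp : measure_display)
  (T : measurableType dsp) (P : probability T R) n (dd : 'I_n -> nat)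
  (X U : rvfam R T dd) :=
  forall A B : forall i : 'I_n, 'I_(dd i) -> set R,
    (forall i k, measurable (A i k)) -> (forall i k, measurable (B i k)) ->
    P [set w | forall i k, A i k (X i k w) /\ B i k (U i k w)] =
    (P [set w | forall i k, A i k (X i k w)] *
     \prod_(i < n) \prod_(k < dd i)
        (@lebesgue_measure R) (B i k `&` `[0%R, 1%R]%classic))%E.

Definition dist_transform (R : realType) (dsp : measure_display)
  (T : measurableType dsp) (P : probability T R) n (dd : 'I_n -> nat)
  (X U : rvfam R T dd) : rvfam R T dd :=
  fun i k w => dtransform P (X i k) (X i k w) (U i k w).

Definition d_cop (R : realType) n (dd : 'I_n -> nat) (d : dep_measure R dd)
  (dsp : measure_display) (T : measurableType dsp) (P : probability T R)
  (X U : rvfam R T dd) : R :=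
  d dsp T P (dist_transform P X U).

Definition strictly_monotone (R : realType) (g : R -> R) :=
  (forall x y, x < y -> g x < g y) \/ (forall x y, x < y -> g y < g x).

From HB Require Import structures.
From mathcomp Require Import all_boot all_order all_algebra.
From mathcomp Require Import all_classical all_reals all_analysis.
From mathcomp Require Import measurable_realfun lra ring.
Import Order.TTheory GRing.Theory Num.Theory.
Local Open Scope classical_set_scope.
Local Open Scope ring_scope.

(* For one coordinate, T_{g(Y)}(g y, u) = T_Y(y, u) when g is strictly
   increasing, and T_{g(Y)}(g y, u) = 1 - T_Y(y, 1 - u) when g is strictly
   decreasing.  Hence the transform of (g_i(X_i)) is the transform of X
   computed with U_{i,k} replaced by 1 - U_{i,k} on the decreasing
   coordinates, up to a sign change and a shift by 1 on those coordinates;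
   translation invariance and element-wise symmetry remove these.  Since
   u |-> 1 - u preserves the uniform law on [0, 1], the reflected uniforms are
   again independent uniforms independent of X, so both transforms have the
   same joint law and law invariance concludes. *)

Lemma measurable_preimage {d d'} {T : measurableType d} {V : measurableType d'}
    (Y : T -> V) (B : set V) :
  measurable_fun setT Y -> measurable B -> measurable [set w | B (Y w)].
Proof. by move=> mY mB; rewrite -[X in measurable X]setTI; exact: mY. Qed.

Section distributional_transform.
Context {R : realType} {d : measure_display} {T : measurableType d}.
Variable P : probability T R.

Definition cdf_lt (Y : T -> R) (y : R) : R := fine (P [set w | Y w < y]).
Definition cdf_le (Y : T -> R) (y : R) : R := fine (P [set w | Y w <= y]).

Lemma dtransform_increasing {Y : T -> R} {g : R -> R} :
  {homo g : x y / x < y} -> forall y u,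
  dtransform P (g \o Y) (g y) u = dtransform P Y y u.
Proof.
move=> /le_mono g_mono y u; rewrite /dtransform /=.
under eq_set do rewrite (leW_mono g_mono).
suff -> : [set w | g (Y w) = g y] = [set w | Y w = y] by [].
by apply/seteqP; split => w /=; [move/(inc_inj g_mono)|move->].
Qed.

Section measurable_variable.
Context {Y : T -> R} (mY : measurable_fun setT Y).

Lemma measurable_lt_level y : measurable [set w | Y w < y].
Proof. by apply: (measurable_preimage _ [set z | z < y] mY); rewrite -set_itvNyo. Qed.

Lemma measurable_le_level y : measurable [set w | Y w <= y].
Proof. by apply: (measurable_preimage _ [set z | z <= y] mY); rewrite -set_itvNyc. Qed.

Lemma measurable_eq_level y : measurable [set w | Y w = y].
Proof. exact: (measurable_preimage _ [set y] mY). Qed.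

Lemma probability_le_level y :
  P [set w | Y w <= y] = (P [set w | (Y w < y)%R] + P [set w | Y w = y])%E.
Proof.
have [mlt meq] := (measurable_lt_level y, measurable_eq_level y).
rewrite -measureU//; last by apply/seteqP; split => // w /= [] /[swap] ->; rewrite ltxx.
congr (P _); apply/seteqP; split => w /=; last by case=> [/ltW|->].
by rewrite le_eqVlt => /orP[/eqP|]; [right|left].
Qed.

Let finite_lt y : P [set w | Y w < y] \is a fin_num.
Proof. exact/fin_num_measure/measurable_lt_level. Qed.

Let finite_le y : P [set w | Y w <= y] \is a fin_num.
Proof. exact/fin_num_measure/measurable_le_level. Qed.

Let finite_eq y : P [set w | Y w = y] \is a fin_num.
Proof. exact/fin_num_measure/measurable_eq_level. Qed.

Lemma cdf_lt_nondecreasing : {homo cdf_lt Y : x y / x <= y}.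
Proof.
move=> x y le_xy; apply: fine_le => //.
apply: le_measure; rewrite ?inE; [exact: measurable_lt_level..|].
by move=> w /= /lt_le_trans; apply.
Qed.

Lemma cdf_le_nondecreasing : {homo cdf_le Y : x y / x <= y}.
Proof.
move=> x y le_xy; apply: fine_le => //.
apply: le_measure; rewrite ?inE; [exact: measurable_le_level..|].
by move=> w /= /le_trans; apply.
Qed.

Lemma dtransformE y u :
  dtransform P Y y u = cdf_lt Y y + u * (cdf_le Y y - cdf_lt Y y).
Proof.
by rewrite /dtransform /cdf_lt /cdf_le probability_le_level fineD//; ring.
Qed.

Lemma measurable_dtransform :
  measurable_fun setT (fun yu : R * R => dtransform P Y yu.1 yu.2).
Proof.
have mlt : measurable_fun setT (cdf_lt Y).
  exact: nondecreasing_measurable cdf_lt_nondecreasing.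
have mle : measurable_fun setT (cdf_le Y).
  exact: nondecreasing_measurable cdf_le_nondecreasing.
under eq_fun do rewrite dtransformE.
apply: measurable_funD; first exact: measurableT_comp.
apply: measurable_funM => //; apply: measurable_funB; exact: measurableT_comp.
Qed.

Lemma dtransform_decreasing {g : R -> R} :
  {homo g : x y /~ x < y} -> forall y u,
  dtransform P (g \o Y) (g y) u = 1 - dtransform P Y y (1 - u).
Proof.
move=> /le_nmono g_mono y u; rewrite /dtransform /=.
under eq_set do rewrite (leW_nmono g_mono).
have -> : [set w | g (Y w) = g y] = [set w | Y w = y].
  by apply/seteqP; split => w /=; [move/(dec_inj g_mono)|move->].
have -> : [set w | y < Y w] = ~` [set w | Y w <= y].
  by apply/seteqP; split => w /=; rewrite ltNge => /negP.
rewrite probability_setC; last exact: measurable_le_level.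
rewrite probability_le_level fineB ?fin_numD ?finite_lt ?finite_eq ?fineD//=; ring.
Qed.
End measurable_variable.
End distributional_transform.

Lemma measurable_dist_transform {R : realType} {n} {dd : 'I_n -> nat} {d}
    {T : measurableType d} (P : probability T R) (X U : rvfam R T dd) :
  rvfam_meas X -> rvfam_meas U -> rvfam_meas (dist_transform P X U).
Proof.
move=> mX mU i k; exact: measurableT_comp (measurable_dtransform P (mX i k))
  (measurable_fun_pair (mX i k) (mU i k)).
Qed.

Lemma measurable_fun_reflect (R : realType) :
  measurable_fun setT (fun u : R => 1 - u).
Proof. by apply: measurable_funB => //; exact: measurable_cst. Qed.

Lemma lebesgue_measure_reflect (R : realType) (A : set R) : measurable A ->
  lebesgue_measure [set u | A (1 - u)] = lebesgue_measure A.
Proof.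
move=> mA; have := @lebesgue_measure_unique R (pushforward lebesgue_measure
  ((fun u => 1 - u) : measurableTypeR R -> measurableTypeR R)).
move=> /(_ (measurable_fun_reflect R)) uniq; rewrite [RHS]uniq {uniq mA}// => _ [[a b] _ <-].
rewrite /= /pushforward.
have -> : (fun u : R => 1 - u) @^-1` `]a, b]%classic = `[1 - b, 1 - a[%classic.
  by apply/seteqP; split => x /=; rewrite !in_itv /= => /andP[? ?]; apply/andP; split; lra.
rewrite !lebesgue_measure_itv /= !lte_fin ltrD2l ltrN2.
by case: ifP => // _; rewrite -!EFinD; congr EFin; ring.
Qed.

Section reflected_uniforms.
Context {R : realType} {n : nat} {dd : 'I_n -> nat} {d : measure_display}.
Context {T : measurableType d} (P : probability T R).
Variable c : forall i : 'I_n, 'I_(dd i) -> bool.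

Definition reflect_on (U : rvfam R T dd) : rvfam R T dd :=
  fun i k w => if c i k then 1 - U i k w else U i k w.

Lemma measurable_reflect_on {U} : rvfam_meas U -> rvfam_meas (reflect_on U).
Proof.
move=> mU i k; rewrite /reflect_on; case: (c i k); last exact: mU.
exact: measurableT_comp (measurable_fun_reflect R) (mU i k).
Qed.

Lemma indep_uniforms_of_reflect_on {X U} :
  indep_uniforms_of P X U -> indep_uniforms_of P X (reflect_on U).
Proof.
move=> XU A B mA mB.
pose B' i k := if c i k then [set u | B i k (1 - u)] else B i k.
have mB' i k : measurable (B' i k).
  rewrite /B'; case: (c i k); last exact: mB.
  exact: measurable_preimage (measurable_fun_reflect R) (mB i k).
have -> : [set w | forall i k, A i k (X i k w) /\ B i k (reflect_on U i k w)] =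
          [set w | forall i k, A i k (X i k w) /\ B' i k (U i k w)].
  by apply/seteqP; split => w /= + i k => /(_ i k); rewrite /B' /reflect_on; case: (c i k).
rewrite XU//; congr (_ * _)%E; apply: eq_bigr => i _; apply: eq_bigr => k _.
rewrite /B'; case: (c i k) => //.
rewrite -[RHS]lebesgue_measure_reflect; last exact: measurableI.
congr lebesgue_measure; apply/seteqP; split => u /=; rewrite !in_itv/=;
  by move=> [? /andP[? ?]]; split => //; apply/andP; split; lra.
Qed.

End reflected_uniforms.

Lemma measurable_forall {d} {T : measurableType d} {I : finType} (F : I -> set T) :
  (forall p, measurable (F p)) -> measurable [set w | forall p, F p w].
Proof.
move=> mF; rewrite (_ : [set w | _] = \bigcap_(p in [set: I]) F p).
  by apply: fin_bigcap_measurable => //; exact: finite_finset.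
by apply/seteqP; split => w /= wF p //; exact: wF.
Qed.

Definition rect_space (R : realType) (I : finType) := I -> (R * R)%type.
HB.instance Definition _ R I := gen_eqMixin (rect_space R I).
HB.instance Definition _ R I := gen_choiceMixin (rect_space R I).
HB.instance Definition _ (R : realType) I :=
  isPointed.Build (rect_space R I) (fun _ => (0, 0)).

Section rectangles.
Context {R : realType} {I : finType}.

Definition rectangle (A B : I -> set R) : set (rect_space R I) :=
  [set z | forall p, A p (z p).1 /\ B p (z p).2].

Definition measurable_rectangles : set (set (rect_space R I)) :=
  [set S | exists A B : I -> set R, [/\ forall p, measurable (A p),
    forall p, measurable (B p) & S = rectangle A B]].

(* Products of measurable rectangles generate the product sigma-algebra on
   (R * R)^I, and their probabilities are exactly what [indep_uniforms_of]
   prescribes. *)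
Local Notation Z := (g_sigma_algebraType measurable_rectangles).

Lemma measurable_rectangles_setI_closed : setI_closed measurable_rectangles.
Proof.
move=> _ _ [A1 [B1 [mA1 mB1 ->]]] [A2 [B2 [mA2 mB2 ->]]].
exists (fun p => A1 p `&` A2 p), (fun p => B1 p `&` B2 p).
split=> [p|p|]; try exact: measurableI.
apply/seteqP; split => z /=.
  by move=> [z1 z2] p; have [? ?] := z1 p; have [] := z2 p.
by move=> z12; split => p; have [[? ?] [? ?]] := z12 p.
Qed.

Lemma measurable_fun_coord (p : I) : measurable_fun setT (fun z : Z => z p).
Proof.
pose only_at (B : set R) q := if q == p then B else setT.
have mOnly B : measurable B -> forall q, measurable (only_at B q).
  by move=> mB q; rewrite /only_at; case: ifP.
apply/measurable_fun_pairP; split => _ B mB; rewrite setTI; apply: sub_sigma_algebra.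
- exists (only_at B), (fun _ => setT); split => //; first exact: mOnly.
  apply/seteqP; split => z /=; last by move/(_ p); rewrite /only_at eqxx => -[].
  by move=> Bz q; rewrite /only_at; case: eqP => [->|].
- exists (fun _ => setT), (only_at B); split => //; first exact: mOnly.
  apply/seteqP; split => z /=; last by move/(_ p); rewrite /only_at eqxx => -[].
  by move=> Bz q; rewrite /only_at; case: eqP => [->|].
Qed.

Lemma measurable_fun_into_rect_space {d} {T : measurableType d} (W : T -> Z) :
  (forall p, measurable_fun setT (fun w => W w p)) -> measurable_fun setT W.
Proof.
move=> mW; apply: (@measurability _ _ T Z setT W measurable_rectangles erefl).
move=> _ [_ [A [B [mA mB ->]]] <-].
rewrite setTI; apply: measurable_forall => p.
exact: measurable_preimage (mW p) (measurableX (mA p) (mB p)).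
Qed.

Lemma rectangle_law_unique {d1 d2} {T1 : measurableType d1} {T2 : measurableType d2}
    (P1 : probability T1 R) (P2 : probability T2 R) (W1 : T1 -> Z) (W2 : T2 -> Z) :
  measurable_fun setT W1 -> measurable_fun setT W2 ->
  (forall A B, (forall p, measurable (A p)) -> (forall p, measurable (B p)) ->
    P1 (W1 @^-1` rectangle A B) = P2 (W2 @^-1` rectangle A B)) ->
  forall E : set Z, measurable E -> P1 (W1 @^-1` E) = P2 (W2 @^-1` E).
Proof.
move=> mW1 mW2 W12 E mE.
have full_rect : forall k : nat, measurable_rectangles [set: Z].
  move=> _; exists (fun _ => setT), (fun _ => setT).
  by split=> //; apply/seteqP; split.
have cover : \bigcup_(k : nat) [set: Z] = [set: Z].
  by apply/seteqP; split => // z _; exists 0%N.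
have := @measure_unique _ R Z measurable_rectangles (fun _ => setT) erefl
  measurable_rectangles_setI_closed full_rect cover (pushforward P1 W1) (pushforward P2 W2).
move=> /(_ mW1 mW2); apply => //.
- by move=> _ [A [B [mA mB ->]]]; exact: W12.
- move=> _; change (P1 (W1 @^-1` setT) < +oo)%E.
  by rewrite preimage_setT probability_setT ltry.
Qed.

End rectangles.

Section joint_law.
Context {R : realType} {n : nat} {dd : 'I_n -> nat} {d : measure_display}.
Context {T : measurableType d} (P : probability T R).
Local Notation K := {i : 'I_n & 'I_(dd i)}.
Local Notation Z := (g_sigma_algebraType (@measurable_rectangles R K)).

Definition pair_family (X V : rvfam R T dd) : T -> Z :=
  fun w p => (X (tag p) (tagged p) w, V (tag p) (tagged p) w).

Lemma measurable_pair_family X V :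
  rvfam_meas X -> rvfam_meas V -> measurable_fun setT (pair_family X V).
Proof.
move=> mX mV; apply: measurable_fun_into_rect_space => p.
exact: measurable_fun_pair (mX _ _) (mV _ _).
Qed.

Lemma pair_family_preimage_rectangle X V (A B : K -> set R) :
  pair_family X V @^-1` rectangle A B =
  [set w | forall i k, A (Tagged _ k) (X i k w) /\ B (Tagged _ k) (V i k w)].
Proof.
apply/seteqP; split => w /= XV; last by case=> i k; exact: XV.
by move=> i k; exact: (XV (Tagged _ k)).
Qed.

Lemma same_law_indep_uniforms {h : forall i, 'I_(dd i) -> R * R -> R} {X U V} :
  (forall i k, measurable_fun setT (h i k)) ->
  rvfam_meas X -> rvfam_meas U -> rvfam_meas V ->
  indep_uniforms_of P X U -> indep_uniforms_of P X V ->
  same_law P (fun i k w => h i k (X i k w, U i k w))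
           P (fun i k w => h i k (X i k w, V i k w)).
Proof.
move=> mh mX mU mV XU XV A mA.
pose E : set Z := [set z | forall p, A (tag p) (tagged p) (h (tag p) (tagged p) (z p))].
have mE : measurable E.
  apply: measurable_forall => p; apply: measurable_preimage (mA _ _).
  exact: measurableT_comp (mh _ _) (measurable_fun_coord p).
have preimageE W : pair_family X W @^-1` E =
    [set w | forall i k, A i k (h i k (X i k w, W i k w))].
  apply/seteqP; split => w /= hXW; last by case=> i k; exact: hXW.
  by move=> i k; exact: (hXW (Tagged _ k)).
rewrite -!preimageE; apply: rectangle_law_unique mE.
- exact: measurable_pair_family.
- exact: measurable_pair_family.
move=> A' B' mA' mB'; rewrite !pair_family_preimage_rectangle.
have mAt (i : 'I_n) (k : 'I_(dd i)) : measurable (A' (Tagged _ k)) by exact: mA'.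
have mBt (i : 'I_n) (k : 'I_(dd i)) : measurable (B' (Tagged _ k)) by exact: mB'.
by rewrite (XU _ _ mAt mBt) (XV _ _ mAt mBt).
Qed.

End joint_law.

Section coordinate_flips.
Context {R : realType} {n : nat} {dd : 'I_n -> nat}.
Local Notation K := {i : 'I_n & 'I_(dd i)}.

Lemma rvfam_ext {T} (Y1 Y2 : rvfam R T dd) :
  (forall i k w, Y1 i k w = Y2 i k w) -> Y1 = Y2.
Proof.
move=> Y12; apply: functional_extensionality_dep => i.
by apply/funext => k; apply/funext => w; exact: Y12.
Qed.

Definition flip_on (c : forall i, 'I_(dd i) -> bool) {T} (Y : rvfam R T dd) : rvfam R T dd :=
  fun i k w => if c i k then - Y i k w else Y i k w.

Lemma measurable_flip_on c {d} {T : measurableType d} (Y : rvfam R T dd) :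
  rvfam_meas Y -> rvfam_meas (flip_on c Y).
Proof.
move=> mY i k; rewrite /flip_on; case: (c i k); last exact: mY.
exact: measurable_funN.
Qed.

Lemma eq_Tagged_ord (i : 'I_n) (k : 'I_(dd i)) (p : K) :
  (i == tag p) && (val k == val (tagged p)) = (Tagged (fun i => 'I_(dd i)) k == p).
Proof.
apply/andP/eqP => [|<-]; last by rewrite !eqxx.
by case: p => j l /= [/eqP ij]; subst j => /eqP/val_inj ->.
Qed.

Lemma elementwise_symmetric_flip_on {d : dep_measure R dd}
    (dsym : elementwise_symmetric d) c {dsp} {T : measurableType dsp}
    (P : probability T R) {Y : rvfam R T dd} :
  rvfam_meas Y -> d dsp T P (flip_on c Y) = d dsp T P Y.
Proof.
move=> mY.
suff flip_seq (s : seq K) :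
    d dsp T P (flip_on (fun i k => Tagged (fun i => 'I_(dd i)) k \in s) Y) = d dsp T P Y.
  rewrite -(flip_seq [seq p <- enum [set: K] | c (tag p) (tagged p)]); congr (d _ _ _ _).
  by apply: rvfam_ext => i k w; rewrite /flip_on mem_filter mem_enum in_setT andbT.
elim: s => [|p s IH].
  by congr (d _ _ _ _); apply: rvfam_ext => i k w; rewrite /flip_on in_nil.
rewrite -IH; case: (boolP (p \in s)) => ps.
  congr (d _ _ _ _); apply: rvfam_ext => i k w.
  by rewrite /flip_on in_cons; case: eqP => [->|]; rewrite ?ps.
rewrite -(dsym _ _ P _ (tag p) (tagged p) (measurable_flip_on _ _ mY)).
congr (d _ _ _ _); apply: rvfam_ext => i k w.
rewrite /flip_on eq_Tagged_ord in_cons; case: eqP => [pE|//].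
by rewrite pE (negbTE ps) opprK.
Qed.

End coordinate_flips.

Lemma dist_transform_monotone_comp {R : realType} {n} {dd : 'I_n -> nat} {d}
    {T : measurableType d} (P : probability T R) {X U : rvfam R T dd}
    {g : forall i : 'I_n, 'I_(dd i) -> R -> R} {c : forall i, 'I_(dd i) -> bool} :
  rvfam_meas X ->
  (forall i k, c i k -> {homo g i k : x y /~ x < y}) ->
  (forall i k, ~~ c i k -> {homo g i k : x y / x < y}) ->
  dist_transform P (fun i k w => g i k (X i k w)) U =
  (fun i k w => flip_on c (dist_transform P X (reflect_on c U)) i k w +
                (if c i k then 1 else 0)).
Proof.
move=> mX g_decr g_incr.
apply: rvfam_ext => i k w; rewrite /dist_transform /flip_on /reflect_on.
case cE: (c i k).
- by rewrite (dtransform_decreasing P (mX i k) (g_decr i k cE)) addrC.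
- by rewrite (dtransform_increasing P (g_incr i k (negbT cE))) addr0.
Qed.

Theorem mainTheorem2 (R : realType) (n : nat) (dd : 'I_n -> nat)
  (d : dep_measure R dd)
  (hn : (2 <= n)%N)
  (hlaw : law_invariant d) (htrans : translation_invariant d)
  (hsym : elementwise_symmetric d)
  (dsp : measure_display) (T : measurableType dsp) (P : probability T R)
  (X U : rvfam R T dd)
  (hX : rvfam_meas X) (hU : rvfam_meas U)
  (hXU : indep_uniforms_of P X U)
  (g : forall i : 'I_n, 'I_(dd i) -> R -> R)
  (hg : forall i k, strictly_monotone (g i k)) :
  d_cop d P X U = d_cop d P (fun i k w => g i k (X i k w)) U.
Proof.
pose c i k := `[< {homo g i k : x y /~ x < y} >].
have g_decr i k : c i k -> {homo g i k : x y /~ x < y} by move=> /asboolP.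
have g_incr i k : ~~ c i k -> {homo g i k : x y / x < y}.
  move=> /asboolPn not_decr; case: (hg i k) => // decr.
  by exfalso; apply: not_decr => x y; exact: decr.
pose V := dist_transform P X (reflect_on c U).
have mV : rvfam_meas V.
  by apply: measurable_dist_transform; last exact: measurable_reflect_on.
rewrite /d_cop (dist_transform_monotone_comp P hX g_decr g_incr).
rewrite (htrans _ _ _ _ (fun i k => if c i k then 1 else 0));
  last exact: measurable_flip_on.
rewrite (elementwise_symmetric_flip_on hsym c P mV).
apply: hlaw => //; first exact: measurable_dist_transform.
apply: (same_law_indep_uniforms P (fun i k => measurable_dtransform P (hX i k))) => //.
- exact: measurable_reflect_on.
- exact: indep_uniforms_of_reflect_on.
Qed.
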